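(* Let a steady perfect fluid flow of class $C^2$ be given on a neighborhood $U$ of a point $p$ in a $(d+1)$-dimensional spacetime, with local chart $(\tau,\lambda,X^i)$ on $U$ as in the context, and let $\gamma:(\sigma_1,\sigma_2)\to U$ be the fluid world line through $p$, parametrized by proper time $\sigma$. On $\Gamma=(\sigma_1,\sigma_2)\times\mathbb R_{>0}$ define $$F(\sigma,n)=h(n,s)^2\,|g_{\tau\tau}(\gamma(\sigma))|\left[1+\left(\frac{\mu}{\sqrt{|g(\gamma(\sigma))|}\,n}\right)^2\right],$$ and let $c:(\sigma_1,\sigma_2)\to\Gamma$, $c(\sigma)=(\sigma,n(\gamma(\sigma)))$. If $p$ is a sonic point, then $p_c:=c(\gamma^{-1}(p))$ satisfies $\partial_nF|_{p_c}=0$ and $\partial_\sigma F|_{p_c}=0$, and $$\mathrm{Hess}:=\big\{(\partial_\sigma^2F)(\partial_n^2F)-(\partial_\sigma\partial_nF)^2\big\}\big|_{p_c}\le0 .$$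
   Context: Perfect fluid: positive functions $n,h,P,s,T$ and $\mathbf u$ ($\mathbf u\cdot\mathbf u=-1$) with $\mathbf dh=T\mathbf ds+n^{-1}\mathbf dP$, $\nabla\cdot(n\mathbf u)=0$, $\nabla\cdot(nh\,\mathbf u\otimes\mathbf u+P\mathbf g^{-1})=0$, equation of state $h=h(P,s)$ (equivalently $h=h(n,s)$), speed of sound $v_{\rm s}^2=(\partial\ln h/\partial\ln n)_s\in(0,1)$. Steady w.r.t. a timelike Killing field $\boldsymbol\xi$ on $U$: $\mathcal L_{\boldsymbol\xi}P=\mathcal L_{\boldsymbol\xi}s=0$, $\mathcal L_{\boldsymbol\xi}\mathbf u=0$. With $\bar{\boldsymbol\xi}=\boldsymbol\xi/\sqrt{|\boldsymbol\xi\cdot\boldsymbol\xi|}$, $\mathbf u=(1-v^2)^{-1/2}(\bar{\boldsymbol\xi}+v\bar{\boldsymbol\eta})$, $v\in[0,1)$, $\bar{\boldsymbol\eta}$ unit spacelike orthogonal to $\bar{\boldsymbol\xi}$, $\mathcal L_{\boldsymbol\xi}\bar{\boldsymbol\eta}=0$; sonic point: $v=v_{\rm s}$. Chart: coordinates $(\tau,\lambda,X^i)$ on $U$ with $\boldsymbol\xi=\boldsymbol\partial_\tau$, $\bar{\boldsymbol\eta}=\boldsymbol\partial_\lambda$ (so $g_{\lambda\lambda}=1$), the $X^i$ constant on the leaves spanned by $\boldsymbol\xi,\bar{\boldsymbol\eta}$; $g$ denotes $\det(g_{\mu\nu})$ in this chart. Along $\gamma$ (which lies in one leaf), $s$ is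 constant and $\mu:=\sqrt{|g|}\,n\,u^\lambda$ is constant, where $u^\lambda=d\lambda/d\sigma$. *)

From HB Require Import structures.
From mathcomp Require Import all_boot all_order all_algebra.
From mathcomp Require Import all_classical all_reals all_analysis.
Set Implicit Arguments. Unset Strict Implicit. Unset Printing Implicit Defensive.
Import Order.TTheory GRing.Theory Num.Theory.
Import numFieldNormedType.Exports.
Local Open Scope classical_set_scope.
Local Open Scope ring_scope.

Section Defs.
Variable R : realType.
Variable k : nat.
(* spacetime dimension d+1 = k.+2, coordinates (x^0,...,x^(k+1)) = (tau, lambda, X^i) *)
Notation D := k.+2.
Notation pt := 'rV[R]_D.

Definition tau_i : 'I_D := ord0.
Definition lam_i : 'I_D := lift ord0 ord0.

Definition evec (m : 'I_D) : 'rV[R]_D := delta_mx 0 m.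

Definition pd (m : 'I_D) (f : pt -> R) (x : pt) : R :=
  derive1 (fun t : R => f (x + t *: evec m)) 0.

Definition C1_on (U : set pt) (f : pt -> R) : Prop :=
  {within U, continuous f} /\
  forall m, (forall x, U x -> derivable (fun t : R => f (x + t *: evec m)) 0 1) /\
            {within U, continuous (pd m f)}.

Definition C2_on (U : set pt) (f : pt -> R) : Prop :=
  C1_on U f /\ forall m, C1_on U (pd m f).

Definition C2_on_R (I : set R) (f : R -> R) : Prop :=
  (forall x, I x -> derivable f x 1 /\ derivable (derive1 f) x 1) /\
  {within I, continuous (derive1n 2 f)}.

Definition minkowski : 'M[R]_D :=
  diag_mx (\row_(i < D) (if i == tau_i then -1 else 1)).

Definition lorentzian (G : 'M[R]_D) : Prop :=
  G^T = G /\ exists A : 'M[R]_D, A \in unitmx /\ A^T *m G *m A = minkowski.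

Definition gdot (g : pt -> 'M[R]_D) (x : pt) (X Y : 'rV[R]_D) : R :=
  \sum_(a < D) \sum_(b < D) g x a b * X 0 a * Y 0 b.

Definition christoffel (g : pt -> 'M[R]_D) (a b c : 'I_D) (x : pt) : R :=
  2^-1 * \sum_(e < D) (invmx (g x)) a e *
    (pd b (fun y => g y e c) x + pd c (fun y => g y e b) x - pd e (fun y => g y b c) x).

Definition div_vec (g : pt -> 'M[R]_D) (V : pt -> 'rV[R]_D) (x : pt) : R :=
  \sum_(m < D) pd m (fun y => V y 0 m) x +
  \sum_(m < D) \sum_(l < D) christoffel g m m l x * V x 0 l.

Definition div_tens (g : pt -> 'M[R]_D) (T : pt -> 'M[R]_D) (nu : 'I_D) (x : pt) : R :=
  \sum_(m < D) pd m (fun y => T y m nu) x +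
  \sum_(m < D) \sum_(l < D) christoffel g m m l x * T x l nu +
  \sum_(m < D) \sum_(l < D) christoffel g nu m l x * T x m l.

Definition xi : pt -> 'rV[R]_D := fun _ => evec tau_i.
Definition etabar : pt -> 'rV[R]_D := fun _ => evec lam_i.

Definition lie_fun (X : pt -> 'rV[R]_D) (f : pt -> R) (x : pt) : R :=
  \sum_(a < D) X x 0 a * pd a f x.

Definition lie_vec (X V : pt -> 'rV[R]_D) (x : pt) : 'rV[R]_D :=
  \row_(m < D) \sum_(a < D)
     (X x 0 a * pd a (fun y => V y 0 m) x - V x 0 a * pd a (fun y => X y 0 m) x).

Definition lie_met (X : pt -> 'rV[R]_D) (g : pt -> 'M[R]_D) (x : pt) : 'M[R]_D :=
  \matrix_(m < D, n < D) \sum_(a < D)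
     (X x 0 a * pd a (fun y => g y m n) x + g x a n * pd m (fun y => X y 0 a) x
      + g x m a * pd n (fun y => X y 0 a) x).

Definition stress (g : pt -> 'M[R]_D) (n h P : pt -> R) (u : pt -> 'rV[R]_D)
  (x : pt) : 'M[R]_D :=
  (n x * h x) *: ((u x)^T *m u x) + P x *: invmx (g x).

(* squared speed of sound (d ln h / d ln n)_s for the equation of state h = Hn(n,s) *)
Definition sound2 (Hn : R -> R -> R) (m s0 : R) : R :=
  m * derive1 (fun m' => Hn m' s0) m / Hn m s0.

Definition mu_of (g : pt -> 'M[R]_D) (n : pt -> R) (u : pt -> 'rV[R]_D) (x : pt) : R :=
  Num.sqrt `|\det (g x)| * n x * u x 0 lam_i.

Definition Ffun (g : pt -> 'M[R]_D) (gam : R -> pt) (Hn : R -> R -> R) (s0 mu : R)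
  (sig m : R) : R :=
  Hn m s0 ^+ 2 * `|g (gam sig) tau_i tau_i| *
  (1 + (mu / (Num.sqrt `|\det (g (gam sig))| * m)) ^+ 2).

End Defs.

Definition dsig {R : realType} (F : R -> R -> R) (a b : R) : R :=
  derive1 (fun x => F x b) a.
Definition dn {R : realType} (F : R -> R -> R) (a b : R) : R :=
  derive1 (fun y => F a y) b.
Definition hessian_det {R : realType} (F : R -> R -> R) (a b : R) : R :=
  derive1 (fun x => dsig F x b) a * derive1 (fun y => dn F a y) b
  - (derive1 (fun x => dn F x b) a) ^+ 2.
Arguments tau_i {k}.
Arguments lam_i {k}.
Arguments evec {R k}.
Arguments xi {R k}.
Arguments etabar {R k}.
Arguments minkowski {R k}.

From Pilot Require Import Defs.
From HB Require Import structures.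
From mathcomp Require Import all_boot all_order all_algebra.
From mathcomp Require Import all_classical all_reals all_analysis.
From mathcomp Require Import ring.
Import Order.TTheory GRing.Theory Num.Theory.
Import numFieldNormedType.Exports.
Local Open Scope classical_set_scope.
Local Open Scope ring_scope.
Set Implicit Arguments. Unset Strict Implicit. Unset Printing Implicit Defensive.

(* Bernoulli's theorem: contracting the Euler equations with the Killing
   field [xi] and using the continuity equation shows that [h u.xi] is
   constant along the stream line, and its square is [F (sg, n (gam sg))].
   So [c] runs in a level set of [F]: differentiating [F (sg, N sg)] once and
   twice gives [F_s + F_n N' = 0] and
   [F_ss + 2 F_sn N' + F_nn N'^2 + F_n N'' = 0].
   At a sonic point [v^2 = (n / h) dh/dn] makes [F_n] vanish, hence [F_s = 0]
   and [F_ss F_nn - F_sn^2 = - (F_sn + F_nn N')^2 <= 0]. *)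

Section Shift.
Variable R : realType.
Implicit Types (F : R -> R) (t : R).

Lemma derivable1_shift F t : derivable F t 1 = derivable (fun h => F (h + t)) 0 1.
Proof. by rewrite /derivable /=; under [in RHS]eq_fun do rewrite addr0 add0r. Qed.

Lemma derive1_shift F t : derive1 F t = derive1 (fun h => F (h + t)) 0.
Proof. by rewrite /derive1 /=; under [in RHS]eq_fun do rewrite addr0 add0r. Qed.

End Shift.

Section CoordinateLines.
Variables (R : realType) (k : nat).
Local Notation pt := 'rV[R]_k.+2.
Implicit Types (f : pt -> R) (x y : pt) (m : 'I_k.+2).

Definition coord_line f x m (t : R) : R := f (x + t *: evec m).

Lemma coord_line0 f x m : coord_line f x m 0 = f x.
Proof. by rewrite /coord_line scale0r addr0. Qed.

Lemma coord_line_shift f x m t :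
  (fun h => coord_line f x m (h + t)) = coord_line f (x + t *: evec m) m.
Proof. by apply/funext => h; rewrite /coord_line scalerDl [h *: _ + _]addrC addrA. Qed.

Lemma is_derive_coord_line f x m t :
  derivable (coord_line f (x + t *: evec m) m) 0 1 ->
  is_derive t 1 (coord_line f x m) (pd m f (x + t *: evec m)).
Proof.
move=> d; apply: DeriveDef; first by rewrite derivable1_shift coord_line_shift.
by rewrite -derive1E derive1_shift coord_line_shift.
Qed.

Definition in_box x (r : R) y := forall i, `|y 0 i - x 0 i| < r.

Lemma ball_of_box x y (r : R) : in_box x r y -> ball x r y.
Proof.
move=> Hy; have r0 : 0 < r := le_lt_trans (normr_ge0 _) (Hy ord0).
rewrite -ball_normE /ball_ /= [`|_|]/Num.Def.normr /= mx_normrE.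
by apply: bigmax_lt => //= -[a b] _ /=; rewrite (ord1 a) !mxE distrC.
Qed.

(* The mean value theorem applied to [t |-> f (y + t e_m) - c0 t]. *)
Lemma le_coord_increment f m y (c c0 eps : R) :
  (forall t, `|t| <= `|c| ->
     derivable (coord_line f (y + t *: evec m) m) 0 1 /\
     `|pd m f (y + t *: evec m) - c0| <= eps) ->
  `|f (y + c *: evec m) - f y - c0 * c| <= eps * `|c|.
Proof.
move=> H.
pose phi : R -> R := coord_line f y m - (fun t => c0 * t).
have dphi (t : R) : `|t| <= `|c| -> is_derive t 1 phi (pd m f (y + t *: evec m) - c0).
  move=> /H [d _]; apply: is_deriveB; first exact: is_derive_coord_line.
  by have := is_deriveZ c0 (is_derive_id t 1); rewrite /GRing.scale /= mulr1.
have bphi (t : R) : `|t| <= `|c| -> `|pd m f (y + t *: evec m) - c0| <= eps.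
  by move=> /H [].
have der (t : R) : `|t| <= `|c| -> derivable phi t 1 by move=> /dphi [].
have -> : f (y + c *: evec m) - f y - c0 * c = phi c - phi 0.
  by rewrite /phi !fctE coord_line0 mulr0 subr0 addrAC.
have [c_ge0|c_lt0] := leP 0 c.
- have bnd t : t \in `[0, c] -> `|t| <= `|c|.
    by rewrite in_itv /= => /andP[t0 tc]; rewrite !ger0_norm // (le_trans t0).
  have [t tI ->] := @MVT_segment R phi _ 0 c c_ge0
    (fun t tI => dphi t (bnd t (subset_itv_oo_cc tI)))
    (derivable_within_continuous (fun t tI => der t (bnd t tI))).
  by rewrite subr0 normrM ler_wpM2r // bphi // bnd.
- have bnd t : t \in `[c, 0] -> `|t| <= `|c|.
    by rewrite in_itv /= => /andP[ct t0]; rewrite !ler0_norm ?lerN2 // ltW.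
  have [t tI E] := @MVT_segment R phi _ c 0 (ltW c_lt0)
    (fun t tI => dphi t (bnd t (subset_itv_oo_cc tI)))
    (derivable_within_continuous (fun t tI => der t (bnd t tI))).
  by rewrite distrC E sub0r normrM normrN ler_wpM2r // bphi // bnd.
Qed.

(* Walk from [x] to [z] one coordinate at a time and telescope. *)
Lemma le_linearization_box f x (r eps : R) :
  (forall y, in_box x r y ->
     (forall m, derivable (coord_line f y m) 0 1) /\
     (forall m, `|pd m f y - pd m f x| <= eps)) ->
  forall z, in_box x r z ->
  `|f z - f x - \sum_(m < k.+2) pd m f x * (z 0 m - x 0 m)|
     <= eps * \sum_(m < k.+2) `|z 0 m - x 0 m|.
Proof.
move=> Hbox z Hz.
pose d i := z 0 i - x 0 i.
pose Y (j : nat) : pt := x + \row_i (if (i < j)%N then d i else 0).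
have Y0 : Y 0%N = x by apply/matrixP => a b; rewrite /Y !mxE addr0.
have YD : Y k.+2 = z.
  by apply/matrixP => a b; rewrite /Y !mxE ltn_ord /d (ord1 a) addrC subrK.
have YS (j : 'I_k.+2) : Y j.+1 = Y j + d j *: evec j.
  apply/matrixP => a b; rewrite /Y !mxE (ord1 a) eqxx /= -addrA; congr (_ + _).
  case: (ltngtP b j) => [bj|jb|/val_inj ->]; last by rewrite ltnSn eqxx mulr1 add0r.
  - by rewrite ltnS ltnW // (ltn_eqF bj : (b == j) = false) mulr0 addr0.
  - by rewrite ltnS leqNgt jb (gtn_eqF jb : (b == j) = false) mulr0 addr0.
have YinBox (j : 'I_k.+2) t : `|t| <= `|d j| -> in_box x r (Y j + t *: evec j).
  move=> tj i; rewrite /Y !mxE eqxx /= -addrA addrC addrK.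
  case: (ltngtP i j) => [ij|ji|/val_inj ->].
  - by rewrite (ltn_eqF ij : (i == j) = false) mulr0 addr0; apply: Hz.
  - by rewrite (gtn_eqF ji : (i == j) = false) mulr0 addr0 normr0 (le_lt_trans _ (Hz i)).
  - by rewrite eqxx add0r mulr1 (le_lt_trans tj (Hz j)).
rewrite -[in f z]YD -[in f x]Y0 -(telescope_sumr (fun j => f (Y j)) (leq0n _)).
rewrite big_mkord -sumrB mulr_sumr (le_trans (ler_norm_sum _ _ _)) //.
apply: ler_sum => j _; rewrite YS; apply: le_coord_increment => t /YinBox /Hbox.
by case=> H1 H2; split; [apply: H1 | apply: H2].
Qed.

Lemma near_box_pd U f x (eps : R) : open U -> U x -> 0 < eps ->
  (forall y, U y -> forall m, derivable (coord_line f y m) 0 1) ->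
  (forall m, {within U, continuous (pd m f)}) ->
  exists2 r : R, 0 < r & forall y, in_box x r y ->
     (forall m, derivable (coord_line f y m) 0 1) /\
     (forall m, `|pd m f y - pd m f x| <= eps).
Proof.
move=> oU Ux eps0 Hd Hc.
have : \forall y \near x, U y /\ forall m, `|pd m f x - pd m f y| <= eps.
  near=> y; split; first by near: y; apply: open_nbhs_nbhs.
  near: y; apply: filter_forall => m.
  have : {in U, continuous (pd m f)} by rewrite -continuous_open_subspace.
  by move=> /(_ x); rewrite inE => /(_ Ux) /cvgrPdist_le /(_ eps eps0).
move=> /nbhs_ballP[r r0 Hr]; exists r => // y /ball_of_box /Hr[Uy Hy].
by split; [apply: Hd | move=> m; rewrite distrC].
Unshelve. all: by end_near.
Qed.

Lemma cvg_coord_quotient (gam : R -> pt) (t0 : R) (w : pt) m :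
  is_derive t0 1 gam w ->
  h^-1 * (gam (h + t0) 0 m - gam t0 0 m) @[h --> 0^'] --> w 0 m.
Proof.
move=> [dg vg].
have /derivable_mxP /(_ 0 m) dm := dg.
have := derive_mx dg; rewrite vg => /(congr1 (fun M : pt => M 0 m)); rewrite mxE => ->.
move: dm; rewrite /derivable => /cvg_ex [l Hl].
rewrite /derive (cvg_lim _ Hl) //; apply: cvg_trans Hl.
by apply: near_eq_cvg; near=> h; rewrite /= [h%:A]mulr1.
Unshelve. all: by end_near.
Qed.

Section Remainder.
Variables (U : set pt) (f : pt -> R) (gam : R -> pt) (t0 : R) (w : pt).
Hypotheses (oU : open U) (Ugam : U (gam t0))
  (f_der : forall y, U y -> forall m, derivable (coord_line f y m) 0 1)
  (pd_cont : forall m, {within U, continuous (pd m f)})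
  (gam_der : is_derive t0 1 gam w).
Local Notation x := (gam t0).
Local Notation Q m h := (h^-1 * (gam (h + t0) 0 m - x 0 m)).

(* The increments of [gam] are [O(h)], and the linearization error of [f]
   is [o] of the increments. *)
Lemma cvg_linearization_quotient :
  h^-1 * (f (gam (h + t0)) - f x - \sum_(m < k.+2) pd m f x * (gam (h + t0) 0 m - x 0 m))
    @[h --> 0^'] --> (0 : R).
Proof.
apply/cvgrPdist_le => e e0.
pose W := \sum_(m < k.+2) (`|w 0 m| + 1).
have W0 : 0 < W.
  rewrite /W big_ord_recl ltr_pwDl ?ltr_wpDl //.
  by apply: sumr_ge0 => i _; apply: addr_ge0.
have [r r0 Hbox] := near_box_pd oU Ugam (divr_gt0 e0 W0) f_der pd_cont.
have Q1 : \forall h \near (0 : R)^', forall m, `|Q m h - w 0 m| <= 1.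
  apply: filter_forall => m.
  move/cvgrPdist_le: (cvg_coord_quotient (m := m) gam_der) => /(_ 1 ltr01).
  by apply: filter_app; near=> h; rewrite distrC.
near=> h.
have hn0 : h != 0 by near: h; exact: nbhs_dnbhs_neq.
have hr : `|h| < r / W by near: h; apply: dnbhs0_lt; apply: divr_gt0.
have Qh1 : forall m, `|Q m h - w 0 m| <= 1 by near: h.
have QW : \sum_(m < k.+2) `|Q m h| <= W.
  apply: ler_sum => m _; rewrite -(subrK (w 0 m) (Q m h)) addrC.
  by rewrite (le_trans (ler_normD _ _)) // lerD2l.
have incr m : gam (h + t0) 0 m - x 0 m = h * Q m h by rewrite mulrA mulfV ?mul1r.
have Hz : in_box x r (gam (h + t0)).
  move=> i; rewrite incr normrM; apply: le_lt_trans (_ : `|h| * W < r).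
    rewrite ler_wpM2l // (le_trans _ QW) // (bigD1 i) //= lerDl.
    by apply: sumr_ge0.
  by rewrite -ltr_pdivlMr.
rewrite sub0r normrN normrM (le_trans (ler_wpM2l _ (le_linearization_box Hbox Hz))) //.
under eq_bigr do rewrite incr normrM.
rewrite -mulr_sumr normfV mulrCA mulKf ?normr_eq0 //.
by rewrite (le_trans (ler_wpM2l _ QW)) ?divfK ?gt_eqF // ltW ?divr_gt0.
Unshelve. all: by end_near.
Qed.

End Remainder.

Lemma is_derive_C1_comp U f (gam : R -> pt) (t0 : R) (w : pt) :
  open U -> C1_on U f -> U (gam t0) -> is_derive t0 1 gam w ->
  is_derive t0 1 (f \o gam) (\sum_(m < k.+2) pd m f (gam t0) * w 0 m).
Proof.
move=> oU [_ Cf] Ux dgam.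
have f_der y : U y -> forall m, derivable (coord_line f y m) 0 1.
  by move=> Uy m; apply: (Cf m).1.
have pd_cont m : {within U, continuous (pd m f)} by apply: (Cf m).2.
have lin := cvg_linearization_quotient oU Ux f_der pd_cont dgam.
have incr : (\sum_(m < k.+2) pd m f (gam t0) * (h^-1 * (gam (h + t0) 0 m - gam t0 0 m)))
    @[h --> 0^'] --> \sum_(m < k.+2) pd m f (gam t0) * w 0 m.
  apply: cvg_big => [|m _]; first exact: add_continuous.
  by apply: cvgM; [exact: cvg_cst | exact: cvg_coord_quotient].
have quot : (fun h : R => h^-1 *: ((f \o gam \o shift t0) (h *: 1) - (f \o gam) t0))
    @ (0 : R)^' --> \sum_(m < k.+2) pd m f (gam t0) * w 0 m.
  rewrite -[X in _ --> X]add0r; apply: cvg_trans (cvgD lin incr).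
  apply: near_eq_cvg; near=> h; rewrite /= [h *: 1]mulr1.
  rewrite !fctE [_ *: _]/GRing.scale /=; under [X in _ + X]eq_bigr do rewrite mulrCA.
  by rewrite -mulr_sumr -mulrDr subrK.
apply: DeriveDef; first by apply/cvg_ex; eexists; exact: quot.
by rewrite /derive; apply: cvg_lim quot.
Unshelve. all: by end_near.
Qed.

End CoordinateLines.

Section BigSums.
Variables (R : pzSemiRingType) (n : nat).

Lemma sum_delta_l (a : 'I_n) (X : 'I_n -> R) : \sum_(e < n) (a == e)%:R * X e = X a.
Proof.
rewrite (bigD1 a) //= eqxx mul1r big1 ?addr0 // => e /negbTE.
by rewrite eq_sym => ->; rewrite mul0r.
Qed.

Lemma sum_delta_r (a : 'I_n) (X : 'I_n -> R) : \sum_(e < n) X e * (e == a)%:R = X a.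
Proof.
rewrite (bigD1 a) //= eqxx mulr1 big1 ?addr0 // => e /negbTE ->.
by rewrite mulr0.
Qed.

Lemma sum_mul_sum (a : 'I_n -> R) (B : 'I_n -> 'I_n -> R) :
  \sum_(v < n) a v * \sum_(m < n) B v m = \sum_(m < n) \sum_(v < n) a v * B v m.
Proof. by under eq_bigr do rewrite mulr_sumr; rewrite exchange_big. Qed.

Lemma sum_mul_sum2 (a : 'I_n -> R) (B : 'I_n -> 'I_n -> 'I_n -> R) :
  \sum_(v < n) a v * \sum_(m < n) \sum_(l < n) B v m l
  = \sum_(m < n) \sum_(l < n) \sum_(v < n) a v * B v m l.
Proof.
rewrite sum_mul_sum; apply: eq_bigr => m _.
by under eq_bigr do rewrite mulr_sumr; rewrite exchange_big.
Qed.

End BigSums.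

(* Pointwise values of the metric [G], its inverse [Gi], the velocity [u], the
   scalars [n h P] and of all their coordinate derivatives ([dG m a b] stands
   for the derivative of [G a b] along the [m]-th coordinate, and so on). *)
Section BernoulliAlgebra.
Variables (R : fieldType) (D : nat) (tau : 'I_D).
Variables (G Gi : 'I_D -> 'I_D -> R) (dG dGi : 'I_D -> 'I_D -> 'I_D -> R).
Variables (u : 'I_D -> R) (du : 'I_D -> 'I_D -> R) (n h P : R) (dn dh dP : 'I_D -> R).

Definition Gam a b c := 2^-1 * \sum_(e < D) Gi a e * (dG b e c + dG c e b - dG e b c).
Definition Tm a b := n * h * (u a * u b) + P * Gi a b.
Definition dTm m b := (dn m * h + n * dh m) * (u m * u b)
   + n * h * (du m m * u b + u m * du m b) + (dP m * Gi m b + P * dGi m m b).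

Hypotheses (G_sym : forall a b, G a b = G b a) (Gi_sym : forall a b, Gi a b = Gi b a)
  (dG_sym : forall m a b, dG m a b = dG m b a)
  (G_Gi : forall a b, \sum_(c < D) G a c * Gi c b = (a == b)%:R)
  (dGi_G : forall m a b, \sum_(c < D) (dGi m a c * G c b + Gi a c * dG m c b) = 0)
  (killing : forall a b, dG tau a b = 0) (dP_tau : dP tau = 0)
  (two_neq0 : (2 : R) != 0).

Lemma sum_G_Gi e : \sum_(v < D) G tau v * Gi e v = (tau == e)%:R.
Proof. by rewrite -G_Gi; apply: eq_bigr => v _; rewrite Gi_sym. Qed.

Lemma lower_Gam_killing m l :
  \sum_(v < D) G tau v * Gam v m l = 2^-1 * (dG m tau l + dG l tau m).
Proof.
rewrite /Gam; under eq_bigr do rewrite mulrCA mulr_sumr.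
rewrite -mulr_sumr exchange_big /=; congr (_ * _).
rewrite -[X in _ = X]subr0 -{3}(killing m l).
rewrite -(sum_delta_l tau (fun j => dG m j l + dG l j m - dG j m l)).
by apply: eq_bigr => j _; rewrite -G_Gi mulr_suml; apply: eq_bigr => i _; rewrite mulrA.
Qed.

Lemma sum_half_sym (Y : 'I_D -> 'I_D -> R) : (forall m l, Y m l = Y l m) ->
  \sum_(m < D) \sum_(l < D) 2^-1 * (dG m tau l + dG l tau m) * Y m l
  = \sum_(m < D) \sum_(l < D) dG m tau l * Y m l.
Proof.
move=> Y_sym.
transitivity (2^-1 * (\sum_(m < D) \sum_(l < D) dG m tau l * Y m l
                    + \sum_(m < D) \sum_(l < D) dG l tau m * Y m l)).
  rewrite -big_split mulr_sumr; apply: eq_bigr => m _.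
  by rewrite -big_split mulr_sumr; apply: eq_bigr => l _ /=; ring.
rewrite [X in _ + X]exchange_big /=.
under [X in _ + X]eq_bigr do under eq_bigr do rewrite Y_sym.
by field.
Qed.

Lemma lower_Gam_uu :
  \sum_(v < D) G tau v * \sum_(m < D) \sum_(l < D) Gam v m l * (u m * u l)
  = \sum_(v < D) (\sum_(m < D) dG m tau v * u m) * u v.
Proof.
rewrite sum_mul_sum2.
transitivity (\sum_(m < D) \sum_(l < D) 2^-1 * (dG m tau l + dG l tau m) * (u m * u l)).
  apply: eq_bigr => m _; apply: eq_bigr => l _.
  by rewrite -lower_Gam_killing mulr_suml; apply: eq_bigr => v _; rewrite mulrA.
rewrite sum_half_sym => [|m l]; last by rewrite mulrC.
rewrite exchange_big /=; apply: eq_bigr => v _; rewrite mulr_suml.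
by apply: eq_bigr => m _; rewrite mulrA.
Qed.

Lemma trace_Gam_killing : \sum_(m < D) Gam m m tau = 0.
Proof.
rewrite /Gam -mulr_sumr.
under eq_bigr do under eq_bigr do rewrite killing addr0 mulrBr.
under eq_bigr do rewrite sumrB.
rewrite sumrB [X in _ - X]exchange_big /=.
by under [X in _ - X]eq_bigr do under eq_bigr do rewrite Gi_sym; rewrite subrr mulr0.
Qed.

(* The pressure part of [G_{tau v} div T^{. v}] vanishes: the [dP] term since
   [P] is steady, the others cancel pairwise by the Killing equation. *)
Lemma lower_pressure_terms :
  \sum_(v < D) G tau v * (\sum_(m < D) dP m * Gi m v + P * \sum_(m < D) dGi m m v
     + P * \sum_(m < D) \sum_(l < D) Gam m m l * Gi l v
     + P * \sum_(m < D) \sum_(l < D) Gam v m l * Gi m l) = 0.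
Proof.
have Ea : \sum_(v < D) G tau v * \sum_(m < D) dP m * Gi m v = 0.
  rewrite sum_mul_sum.
  under eq_bigr do (under eq_bigr do rewrite mulrCA; rewrite -mulr_sumr sum_G_Gi).
  by under eq_bigr do rewrite mulrC; rewrite sum_delta_l dP_tau.
have Eb : \sum_(v < D) G tau v * \sum_(m < D) dGi m m v
          = - \sum_(m < D) \sum_(v < D) Gi m v * dG m v tau.
  rewrite sum_mul_sum -sumrN; apply: eq_bigr => m _.
  transitivity (\sum_(c < D) dGi m m c * G c tau).
    by apply: eq_bigr => v _; rewrite mulrC G_sym.
  by apply/eqP; rewrite -addr_eq0 -big_split /=; apply/eqP; exact: dGi_G.
have Ec : \sum_(v < D) G tau v * \sum_(m < D) \sum_(l < D) Gam m m l * Gi l v = 0.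
  rewrite sum_mul_sum2 -[RHS]trace_Gam_killing; apply: eq_bigr => m _.
  under eq_bigr do (under eq_bigr do rewrite mulrCA; rewrite -mulr_sumr sum_G_Gi).
  by under eq_bigr do rewrite mulrC; rewrite sum_delta_l.
have Ed : \sum_(v < D) G tau v * \sum_(m < D) \sum_(l < D) Gam v m l * Gi m l
          = \sum_(m < D) \sum_(v < D) Gi m v * dG m v tau.
  rewrite sum_mul_sum2.
  transitivity (\sum_(m < D) \sum_(l < D) 2^-1 * (dG m tau l + dG l tau m) * Gi m l).
    apply: eq_bigr => m _; apply: eq_bigr => l _.
    by rewrite -lower_Gam_killing mulr_suml; apply: eq_bigr => v _; rewrite mulrA.
  rewrite sum_half_sym => [|m l]; last by rewrite Gi_sym.
  by apply: eq_bigr => m _; apply: eq_bigr => v _; rewrite mulrC dG_sym.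
transitivity (\sum_(v < D) G tau v * \sum_(m < D) dP m * Gi m v
   + P * \sum_(v < D) G tau v * \sum_(m < D) dGi m m v
   + P * \sum_(v < D) G tau v * \sum_(m < D) \sum_(l < D) Gam m m l * Gi l v
   + P * \sum_(v < D) G tau v * \sum_(m < D) \sum_(l < D) Gam v m l * Gi m l).
  by rewrite !mulr_sumr -!big_split; apply: eq_bigr => v _ /=; ring.
by rewrite Ea Eb Ec Ed; ring.
Qed.

Lemma div_stress_split v :
  \sum_(m < D) dTm m v + \sum_(m < D) \sum_(l < D) Gam m m l * Tm l v
    + \sum_(m < D) \sum_(l < D) Gam v m l * Tm m l
  = h * u v * (\sum_(m < D) (dn m * u m + n * du m m)
               + \sum_(m < D) \sum_(l < D) Gam m m l * (n * u l))
    + n * (u v * (\sum_(m < D) dh m * u m) + h * (\sum_(m < D) du m v * u m)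
           + h * (\sum_(m < D) \sum_(l < D) Gam v m l * (u m * u l)))
    + (\sum_(m < D) dP m * Gi m v + P * \sum_(m < D) dGi m m v
       + P * \sum_(m < D) \sum_(l < D) Gam m m l * Gi l v
       + P * \sum_(m < D) \sum_(l < D) Gam v m l * Gi m l).
Proof.
have E1 : \sum_(m < D) dTm m v = h * u v * (\sum_(m < D) (dn m * u m + n * du m m))
    + n * (u v * (\sum_(m < D) dh m * u m)) + n * h * (\sum_(m < D) du m v * u m)
    + (\sum_(m < D) dP m * Gi m v + P * \sum_(m < D) dGi m m v).
  by rewrite !mulr_sumr -!big_split; apply: eq_bigr => m _ /=; rewrite /dTm; ring.
have E2 : \sum_(m < D) \sum_(l < D) Gam m m l * Tm l v
    = h * u v * (\sum_(m < D) \sum_(l < D) Gam m m l * (n * u l))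
      + P * \sum_(m < D) \sum_(l < D) Gam m m l * Gi l v.
  rewrite !mulr_sumr -!big_split; apply: eq_bigr => m _ /=.
  by rewrite !mulr_sumr -!big_split; apply: eq_bigr => l _ /=; rewrite /Tm; ring.
have E3 : \sum_(m < D) \sum_(l < D) Gam v m l * Tm m l
    = n * h * (\sum_(m < D) \sum_(l < D) Gam v m l * (u m * u l))
      + P * \sum_(m < D) \sum_(l < D) Gam v m l * Gi m l.
  rewrite !mulr_sumr -!big_split; apply: eq_bigr => m _ /=.
  by rewrite !mulr_sumr -!big_split; apply: eq_bigr => l _ /=; rewrite /Tm; ring.
by rewrite E1 E2 E3; ring.
Qed.

(* Contracting the Euler equations with the Killing covector [G_{tau .}] and
   using the continuity equation gives [(u.d) (h u_tau) = 0]. *)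
Lemma bernoulli_identity :
  \sum_(m < D) (dn m * u m + n * du m m)
    + \sum_(m < D) \sum_(l < D) Gam m m l * (n * u l) = 0 ->
  (forall v, \sum_(m < D) dTm m v + \sum_(m < D) \sum_(l < D) Gam m m l * Tm l v
             + \sum_(m < D) \sum_(l < D) Gam v m l * Tm m l = 0) ->
  n != 0 ->
  (\sum_(m < D) dh m * u m) * (\sum_(v < D) G tau v * u v)
  + h * \sum_(v < D) ((\sum_(m < D) dG m tau v * u m) * u v
                      + G tau v * (\sum_(m < D) du m v * u m)) = 0.
Proof.
move=> cont euler n_neq0.
have : \sum_(v < D) G tau v * (\sum_(m < D) dTm m v
    + \sum_(m < D) \sum_(l < D) Gam m m l * Tm l v
    + \sum_(m < D) \sum_(l < D) Gam v m l * Tm m l) = 0.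
  by rewrite big1 // => v _; rewrite euler mulr0.
under eq_bigr do rewrite div_stress_split cont mulr0 add0r mulrDr.
rewrite big_split /= lower_pressure_terms addr0.
under eq_bigr do rewrite mulrCA.
rewrite -mulr_sumr => /eqP; rewrite mulf_eq0 (negbTE n_neq0) /= => /eqP Z.
rewrite -[RHS]Z.
rewrite [RHS](eq_bigr (fun v => (\sum_(m < D) dh m * u m) * (G tau v * u v)
    + h * (G tau v * \sum_(m < D) du m v * u m)
    + h * (G tau v * \sum_(m < D) \sum_(l < D) Gam v m l * (u m * u l)))); last first.
  by move=> v _; ring.
rewrite !big_split /= -!mulr_sumr lower_Gam_uu /=; ring.
Qed.

End BernoulliAlgebra.

Section PartialDerivatives.
Variables (R : realType) (k : nat).
Local Notation pt := 'rV[R]_k.+2.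
Implicit Types (U : set pt) (f g : pt -> R) (x : pt) (m : 'I_k.+2).

Definition pderivable m f x := derivable (coord_line f x m) 0 1.

Local Notation is_pd m f x := (is_derive (0 : R) 1 (coord_line f x m)).

Lemma pderivableP m f x : pderivable m f x -> is_pd m f x (pd m f x).
Proof. by move=> H; rewrite /pd derive1E; apply: derivableP. Qed.

Lemma is_pd_pd m f x d : is_pd m f x d -> pd m f x = d.
Proof. by move=> [_ <-]; rewrite /pd derive1E. Qed.

Lemma is_pdM m f g x df dg : is_pd m f x df -> is_pd m g x dg ->
  is_pd m (fun y => f y * g y) x (f x * dg + g x * df).
Proof. by move=> Hf Hg; have := is_deriveM Hf Hg; rewrite !coord_line0. Qed.

Lemma is_pdD m f g x df dg : is_pd m f x df -> is_pd m g x dg ->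
  is_pd m (fun y => f y + g y) x (df + dg).
Proof. exact: is_deriveD. Qed.

Lemma is_pd_cst m (c : R) x : is_pd m (fun _ => c) x 0.
Proof. exact: is_derive_cst. Qed.

Lemma is_pd_sum m n (F : 'I_n -> pt -> R) (dF : 'I_n -> R) x :
  (forall i, is_pd m (F i) x (dF i)) ->
  is_pd m (fun y => \sum_(i < n) F i y) x (\sum_(i < n) dF i).
Proof.
move=> H; have -> : coord_line (fun y => \sum_(i < n) F i y) x m
                    = \sum_(i < n) coord_line (F i) x m.
  by apply/funext => t; rewrite /coord_line fct_sumE.
exact: is_derive_sum.
Qed.

Lemma near_coord_line U x m : open U -> U x -> \forall t \near (0 : R), U (x + t *: evec m).
Proof.
move=> oU Ux; have /nbhs_ballP[r r0 Hr] : nbhs x U by apply: open_nbhs_nbhs.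
near=> t; apply/Hr/ball_of_box => i.
rewrite !mxE eqxx addrAC subrr add0r normrM.
have tr : `|t| < r by near: t; exact: (@nbhs0_lt R R r r0).
by apply: le_lt_trans tr; rewrite ler_piMr //; case: (i == m); rewrite ?normr1 ?normr0.
Unshelve. all: by end_near.
Qed.

Lemma eq_on_open_is_pd U m f g x d : open U -> U x -> {in U, f =1 g} ->
  is_pd m f x d -> is_pd m g x d.
Proof.
move=> oU Ux fg; apply: near_eq_is_derive.
by near=> t; rewrite /coord_line fg // inE; near: t; apply: near_coord_line.
Unshelve. all: by end_near.
Qed.

Lemma eq_on_open_pd U m f g x : open U -> U x -> {in U, f =1 g} -> pd m f x = pd m g x.
Proof.
move=> oU Ux fg; rewrite /pd !derive1E; apply: near_eq_derive.
by near=> t; rewrite fg // inE; near: t; apply: near_coord_line.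
Unshelve. all: by end_near.
Qed.

Lemma eq_on_open_pderivable U m f g x : open U -> U x -> {in U, f =1 g} ->
  pderivable m f x -> pderivable m g x.
Proof. by move=> oU Ux fg /pderivableP /(eq_on_open_is_pd oU Ux fg) []. Qed.

Lemma pd_cst m (c : R) x : pd m (fun _ => c) x = 0.
Proof. exact/is_pd_pd/is_pd_cst. Qed.

Lemma pderivableM m f g x : pderivable m f x -> pderivable m g x ->
  pderivable m (fun y => f y * g y) x.
Proof. by move=> /pderivableP Hf /pderivableP Hg; have [] := is_pdM Hf Hg. Qed.

Lemma pderivableV m f x : f x != 0 -> pderivable m f x -> pderivable m (fun y => (f y)^-1) x.
Proof. by move=> fx0; apply: derivableV; rewrite coord_line0. Qed.

Lemma pderivable_sum m (I : Type) (r : seq I) (P : pred I) (F : I -> pt -> R) x :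
  (forall i, P i -> pderivable m (F i) x) ->
  pderivable m (fun y => \sum_(i <- r | P i) F i y) x.
Proof.
move=> H; have -> : (fun y => \sum_(i <- r | P i) F i y) = \sum_(i <- r | P i) F i.
  by apply/funext => y; rewrite fct_sumE.
by apply: (big_ind (fun f => pderivable m f x)) => // [|f g]; [exact: derivable_cst | exact: derivableD].
Qed.

Lemma pderivable_prod m (I : Type) (r : seq I) (P : pred I) (F : I -> pt -> R) x :
  (forall i, P i -> pderivable m (F i) x) ->
  pderivable m (fun y => \prod_(i <- r | P i) F i y) x.
Proof.
move=> H; have -> : (fun y => \prod_(i <- r | P i) F i y) = \prod_(i <- r | P i) F i.
  by apply/funext => y; rewrite fct_prodE.
by apply: (big_ind (fun f => pderivable m f x)) => // [|f g]; [exact: derivable_cst | exact: pderivableM].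
Qed.

Lemma pderivable_det m n (M : pt -> 'M[R]_n) x :
  (forall i j, pderivable m (fun y => M y i j) x) -> pderivable m (fun y => \det (M y)) x.
Proof.
move=> H; apply: pderivable_sum => s _.
by apply: pderivableM; [exact: derivable_cst | exact: pderivable_prod].
Qed.

Lemma pderivable_invmx U m (G : pt -> 'M[R]_k.+2) x :
  open U -> U x -> (forall y, U y -> G y \in unitmx) ->
  (forall i j, pderivable m (fun y => G y i j) x) ->
  forall a b, pderivable m (fun y => invmx (G y) a b) x.
Proof.
move=> oU Ux Gunit H a b.
have cramer : {in U, (fun y => (\det (G y))^-1 * cofactor (G y) b a) =1
                     (fun y => invmx (G y) a b)}.
  by move=> y; rewrite inE => Uy; rewrite /invmx Gunit // !mxE.
apply: (eq_on_open_pderivable oU Ux cramer).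
apply: pderivableM.
  apply: pderivableV; last exact: pderivable_det.
  by rewrite -unitfE -unitmxE Gunit.
apply: pderivableM; first exact: derivable_cst.
apply: pderivable_det => i j.
by have -> : (fun y => row' b (col' a (G y)) i j) = (fun y => G y (lift b i) (lift a j))
  by apply/funext => y; rewrite !mxE.
Qed.

End PartialDerivatives.

Section BernoulliPoint.
Variables (R : realType) (k : nat).
Local Notation pt := 'rV[R]_k.+2.
Implicit Types (f : pt -> R) (x : pt) (m : 'I_k.+2).

Lemma C1_on_pderivable (U : set pt) f x m : C1_on U f -> U x -> pderivable m f x.
Proof. by move=> [_ H] Ux; apply: (H m).1. Qed.

Lemma lie_fun_xi f x : lie_fun xi f x = pd tau_i f x.
Proof.
rewrite /lie_fun /xi; under eq_bigr do rewrite mxE /= eq_sym.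
exact: sum_delta_l.
Qed.

Lemma killing_pd_tau (g : pt -> 'M[R]_k.+2) x :
  lie_met xi g x = 0 -> forall a b, pd tau_i (fun y => g y a b) x = 0.
Proof.
move=> + a b => /(congr1 (fun M : 'M[R]_k.+2 => M a b)); rewrite !mxE.
under eq_bigr do rewrite !pd_cst !mulr0 !addr0 /xi mxE /= eq_sym.
by rewrite sum_delta_l.
Qed.

Lemma stressE (g : pt -> 'M[R]_k.+2) (n h P : pt -> R) (u : pt -> 'rV[R]_k.+2) y a b :
  stress g n h P u y a b = n y * h y * (u y 0 a * u y 0 b) + P y * invmx (g y) a b.
Proof. by rewrite /stress !mxE big_ord1 !mxE. Qed.

Variables (U : set pt) (g : pt -> 'M[R]_k.+2) (n h P : pt -> R) (u : pt -> 'rV[R]_k.+2).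
Hypotheses (oU : open U) (g_sym : forall y, U y -> (g y)^T = g y)
  (g_unit : forall y, U y -> g y \in unitmx)
  (g_C1 : forall a b, C1_on U (fun y => g y a b))
  (n_C1 : C1_on U n) (h_C1 : C1_on U h) (P_C1 : C1_on U P)
  (u_C1 : forall a, C1_on U (fun y => u y 0 a)).

Lemma invmx_sym y a b : U y -> invmx (g y) a b = invmx (g y) b a.
Proof. by move=> Uy; rewrite -[in RHS](g_sym Uy) -trmx_inv mxE. Qed.

Lemma pderivable_invmx_metric x m a b : U x -> pderivable m (fun y => invmx (g y) a b) x.
Proof.
move=> Ux; apply: (pderivable_invmx oU Ux g_unit) => i j.
exact: C1_on_pderivable.
Qed.

Lemma pd_invmx_mul x m a b : U x ->
  \sum_(c < k.+2) (pd m (fun y => invmx (g y) a c) x * g x c b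
                   + invmx (g x) a c * pd m (fun y => g y c b) x) = 0.
Proof.
move=> Ux.
have D1 := is_pd_sum (fun c => is_pdM (pderivableP (pderivable_invmx_metric (m := m) (a := a) (b := c) Ux))
                                   (pderivableP (C1_on_pderivable (m := m) (g_C1 c b) Ux))).
have inv_mul : {in U, (fun _ => (a == b)%:R) =1
                      (fun y => \sum_(c < k.+2) invmx (g y) a c * g y c b)}.
  move=> y; rewrite inE => Uy.
  by have /mulVmx/(congr1 (fun M : 'M[R]_k.+2 => M a b)) := g_unit Uy; rewrite !mxE.
have D0 := eq_on_open_is_pd oU Ux inv_mul (is_pd_cst m (a == b)%:R x).
rewrite -[RHS](@derive_val _ _ _ _ _ _ _ D0) (@derive_val _ _ _ _ _ _ _ D1).
by apply: eq_bigr => c _; ring.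
Qed.

Lemma pd_C1M f1 f2 x m : C1_on U f1 -> C1_on U f2 -> U x ->
  pd m (fun y => f1 y * f2 y) x = f1 x * pd m f2 x + f2 x * pd m f1 x.
Proof.
move=> C1f1 C1f2 Ux; apply: is_pd_pd.
by apply: is_pdM; apply: pderivableP; apply: C1_on_pderivable Ux.
Qed.

Lemma bernoulli_point x : U x ->
  lie_met xi g x = 0 -> lie_fun xi P x = 0 ->
  div_vec g (fun y => n y *: u y) x = 0 ->
  (forall nu, div_tens g (stress g n h P u) nu x = 0) ->
  n x != 0 ->
  (\sum_(m < k.+2) pd m h x * u x 0 m) * (\sum_(v < k.+2) g x tau_i v * u x 0 v)
  + h x * \sum_(v < k.+2) ((\sum_(m < k.+2) pd m (fun y => g y tau_i v) x * u x 0 m) * u x 0 v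
                + g x tau_i v * (\sum_(m < k.+2) pd m (fun y => u y 0 v) x * u x 0 m)) = 0.
Proof.
move=> Ux killing P_steady cont euler n_neq0.
apply: (@bernoulli_identity R k.+2 tau_i (fun a b => g x a b) (fun a b => invmx (g x) a b)
   (fun m a b => pd m (fun y => g y a b) x) (fun m a b => pd m (fun y => invmx (g y) a b) x)
   (fun a => u x 0 a) (fun m a => pd m (fun y => u y 0 a) x) (n x) (h x) (P x)
   (fun m => pd m n x) (fun m => pd m h x) (fun m => pd m P x)) => //=.
- by move=> a b; rewrite -[in LHS](g_sym Ux) mxE.
- by move=> a b; apply: invmx_sym.
- move=> m a b; apply: (eq_on_open_pd m oU Ux) => y; rewrite inE => Uy.
  by rewrite -[in LHS](g_sym Uy) mxE.
- move=> a b; have /mulmxV/(congr1 (fun M : 'M[R]_k.+2 => M a b)) := g_unit Ux.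
  by rewrite !mxE.
- by move=> m a b; apply: pd_invmx_mul.
- exact: killing_pd_tau.
- by rewrite -lie_fun_xi.
- rewrite -[RHS]cont /div_vec; congr (_ + _); last first.
    by apply: eq_bigr => m _; apply: eq_bigr => l _; rewrite mxE.
  apply: eq_bigr => m _.
  have -> : (fun y => (n y *: u y) 0 m) = (fun y => n y * u y 0 m).
    by apply/funext => y; rewrite mxE.
  by rewrite (pd_C1M m n_C1 (u_C1 m) Ux); ring.
- move=> v; rewrite -[RHS](euler v) /div_tens; congr (_ + _ + _); last first.
  + by apply: eq_bigr => m _; apply: eq_bigr => l _; rewrite stressE.
  + by apply: eq_bigr => m _; apply: eq_bigr => l _; rewrite stressE.
  apply: eq_bigr => m _.
  have -> : (fun y => stress g n h P u y m v)
      = (fun y => n y * h y * (u y 0 m * u y 0 v) + P y * invmx (g y) m v).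
    by apply/funext => y; rewrite stressE.
  have pdC1 f : C1_on U f -> is_derive (0 : R) 1 (coord_line f x m) (pd m f x).
    by move=> C1f; apply: pderivableP; apply: C1_on_pderivable Ux.
  rewrite (is_pd_pd (is_pdD (is_pdM (is_pdM (pdC1 _ n_C1) (pdC1 _ h_C1))
      (is_pdM (pdC1 _ (u_C1 m)) (pdC1 _ (u_C1 v))))
    (is_pdM (pdC1 _ P_C1) (pderivableP (pderivable_invmx_metric (m := m) (a := m) (b := v) Ux))))).
  by rewrite /dTm /=; ring.
Qed.

End BernoulliPoint.

(* [ring] compares atoms up to conversion, and unfolding [derive1] is very
   expensive: abstract the derivatives first. *)
Ltac generalize_derive1 :=
  repeat match goal with |- context [derive1 ?f ?x] => generalize (derive1 f x); intro end.

Section RealDerivatives.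
Variable R : realType.
Implicit Types (f g : R -> R) (x : R).

Lemma is_derive1M f g x df dg : is_derive x 1 f df -> is_derive x 1 g dg ->
  is_derive x 1 (fun t => f t * g t) (f x * dg + g x * df).
Proof. exact: is_deriveM. Qed.

Lemma is_derive1D f g x df dg : is_derive x 1 f df -> is_derive x 1 g dg ->
  is_derive x 1 (fun t => f t + g t) (df + dg).
Proof. exact: is_deriveD. Qed.

Lemma is_derive1N f x df : is_derive x 1 f df -> is_derive x 1 (fun t => - f t) (- df).
Proof. exact: is_deriveN. Qed.

Lemma is_derive1_sum n (F : 'I_n -> R -> R) (dF : 'I_n -> R) x :
  (forall i, is_derive x 1 (F i) (dF i)) ->
  is_derive x 1 (fun t => \sum_(i < n) F i t) (\sum_(i < n) dF i).
Proof.
move=> H; have -> : (fun t => \sum_(i < n) F i t) = \sum_(i < n) F i.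
  by apply/funext => t; rewrite fct_sumE.
exact: is_derive_sum.
Qed.

Lemma is_derive1_cst (c : R) x : is_derive x 1 (fun _ : R => c) 0.
Proof. exact: is_derive_cst. Qed.

Lemma is_derive1_inv x : x != 0 -> is_derive x 1 (fun t : R => t^-1) (- (x ^+ 2)^-1).
Proof.
by move=> x0; have := is_deriveV x0 (is_derive_id x 1); rewrite [_ *: _]mulr1.
Qed.

Lemma derivable1_is_derive f x : derivable f x 1 -> is_derive x 1 f (derive1 f x).
Proof. by move=> H; rewrite derive1E; apply: derivableP. Qed.

Lemma is_derive1_val f x d : is_derive x 1 f d -> derive1 f x = d.
Proof. by move=> [_ <-]; rewrite derive1E. Qed.

Lemma is_derive1_unique f x d1 d2 : is_derive x 1 f d1 -> is_derive x 1 f d2 -> d1 = d2.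
Proof. by move=> /is_derive1_val <- /is_derive1_val. Qed.

Lemma near_eq_is_derive1 (S : set R) f g x d : (\forall t \near x, S t) ->
  {in S, f =1 g} -> is_derive x 1 f d -> is_derive x 1 g d.
Proof.
move=> NS fg; apply: near_eq_is_derive.
by apply: filter_app NS; near=> t => St; rewrite fg // inE.
Unshelve. all: by end_near.
Qed.

End RealDerivatives.

Section TwiceDerivable.
Variable R : realType.
Implicit Types (S : set R) (f g : R -> R) (x : R).

Definition derivable2_at S x f :=
  (forall t, S t -> derivable f t 1) /\ derivable (derive1 f) x 1.

Variables (S : set R) (x : R).
Hypotheses (nearS : \forall t \near x, S t) (Sx : S x).

Lemma derivable2_atM f g : derivable2_at S x f -> derivable2_at S x g ->
  derivable2_at S x (fun t => f t * g t).
Proof.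
move=> [f1 f2] [g1 g2]; split=> [t St|].
  by have [] := is_derive1M (derivable1_is_derive (f1 _ St)) (derivable1_is_derive (g1 _ St)).
have [] // := near_eq_is_derive1 nearS (g := derive1 (fun t => f t * g t)) _
  (is_derive1D (is_derive1M (derivable1_is_derive (f1 _ Sx)) (derivable1_is_derive g2))
               (is_derive1M (derivable1_is_derive (g1 _ Sx)) (derivable1_is_derive f2))).
move=> t; rewrite inE => St; apply/esym/is_derive1_val.
exact: is_derive1M (derivable1_is_derive (f1 _ St)) (derivable1_is_derive (g1 _ St)).
Qed.

Lemma derivable2_atN f : derivable2_at S x f -> derivable2_at S x (fun t => - f t).
Proof.
move=> [f1 f2]; split=> [t St|].
  by have [] := is_derive1N (derivable1_is_derive (f1 _ St)).
have [] // := near_eq_is_derive1 nearS (g := derive1 (fun t => - f t)) _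
  (is_derive1N (derivable1_is_derive f2)).
move=> t; rewrite inE => St; apply/esym/is_derive1_val.
exact: is_derive1N (derivable1_is_derive (f1 _ St)).
Qed.

End TwiceDerivable.

Lemma derivable2_at_inv (R : realType) (x : R) : 0 < x ->
  derivable2_at [set t | 0 < t] x (fun t => t^-1).
Proof.
move=> x_gt0; split=> [t t_gt0|].
  by have [] := is_derive1_inv (lt0r_neq0 t_gt0).
have x2_neq0 : x * x != 0 by rewrite mulf_neq0 ?lt0r_neq0.
have [] // := near_eq_is_derive1 (lt_nbhsr x_gt0) (g := derive1 (fun t : R => t^-1)) _
  (is_derive1N (is_derive1_comp (g := fun t : R => t * t) (is_derive1_inv x2_neq0)
     (is_derive1M (is_derive_id x 1) (is_derive_id x 1)))).
move=> t; rewrite inE => t_gt0 /=; rewrite (is_derive1_val (is_derive1_inv (lt0r_neq0 t_gt0))).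
by rewrite expr2.
Qed.

Lemma hessian_det_nonpos (R : realFieldType) (Fss Fnn Fsn Fn N1 N2 : R) :
  Fnn * N1 ^+ 2 + Fn * N2 + 2 * Fsn * N1 + Fss = 0 -> Fn = 0 ->
  Fss * Fnn - Fsn ^+ 2 <= 0.
Proof.
move=> E Fn0; have -> : Fss = - (Fnn * N1 ^+ 2) - 2 * Fsn * N1.
  by apply/eqP; rewrite -subr_eq0 -E Fn0; apply/eqP; ring.
have -> : (- (Fnn * N1 ^+ 2) - 2 * Fsn * N1) * Fnn - Fsn ^+ 2 = - (Fsn + Fnn * N1) ^+ 2.
  by ring.
by rewrite oppr_le0 sqr_ge0.
Qed.

(* [F (sg, m) = al m * a sg + be m * c sg] is constant along the curve
   [sg |-> (sg, N sg)]; [ta], [tc] are regular functions agreeing with [a], [c]. *)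
Section SeparableLevelCurve.
Variable R : realType.
Variables (s1 s2 s0 n0 : R) (al be a c ta tc N : R -> R).
Local Notation I := `]s1, s2[.
Hypotheses (s0I : s0 \in I) (n0_gt0 : 0 < n0) (N_s0 : N s0 = n0)
  (al2 : derivable2_at [set m | 0 < m] n0 al) (be2 : derivable2_at [set m | 0 < m] n0 be)
  (a_eq : {in I, a =1 ta}) (c_eq : {in I, c =1 tc})
  (ta2 : derivable2_at (fun t => t \in I) s0 ta) (tc2 : derivable2_at (fun t => t \in I) s0 tc)
  (N2 : derivable2_at (fun t => t \in I) s0 N) (N_gt0 : {in I, forall t, 0 < N t})
  (level : {in I, forall t : R,
     is_derive t 1 (fun t => al (N t) * ta t + be (N t) * tc t) 0})
  (critical : derive1 al n0 * ta s0 + derive1 be n0 * tc s0 = 0).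

Let al_der m : 0 < m -> derivable al m 1 := al2.1 m.
Let be_der m : 0 < m -> derivable be m 1 := be2.1 m.
Let ta_der t : t \in I -> derivable ta t 1 := ta2.1 t.
Let tc_der t : t \in I -> derivable tc t 1 := tc2.1 t.
Let N_der t : t \in I -> derivable N t 1 := N2.1 t.

Local Notation F := (fun sg m => al m * a sg + be m * c sg).

Let dPhi t := derive1 al (N t) * derive1 N t * ta t + al (N t) * derive1 ta t
  + (derive1 be (N t) * derive1 N t * tc t + be (N t) * derive1 tc t).

Let nearI : \forall t \near s0, t \in I.
Proof. exact: near_in_itvoo. Qed.

Lemma dPhi_eq0 t : t \in I -> dPhi t = 0.
Proof.
move=> tI; have Nt := N_gt0 tI.
have dal := is_derive1_comp (derivable1_is_derive (al_der Nt)) (derivable1_is_derive (N_der tI)).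
have dbe := is_derive1_comp (derivable1_is_derive (be_der Nt)) (derivable1_is_derive (N_der tI)).
have := is_derive1D (is_derive1M dal (derivable1_is_derive (ta_der tI)))
                    (is_derive1M dbe (derivable1_is_derive (tc_der tI))).
move=> /is_derive1_unique /(_ (level tI)) <-; rewrite /dPhi /=; generalize_derive1; ring.
Qed.

Lemma dPhi_second :
  derive1 (derive1 al) n0 * derive1 N s0 ^+ 2 * ta s0 + derive1 al n0 * derive1 (derive1 N) s0 * ta s0
  + 2 * derive1 al n0 * derive1 N s0 * derive1 ta s0 + al n0 * derive1 (derive1 ta) s0
  + (derive1 (derive1 be) n0 * derive1 N s0 ^+ 2 * tc s0 + derive1 be n0 * derive1 (derive1 N) s0 * tc s0
  + 2 * derive1 be n0 * derive1 N s0 * derive1 tc s0 + be n0 * derive1 (derive1 tc) s0) = 0.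
Proof.
have dN := derivable1_is_derive (N_der s0I).
have d2N := derivable1_is_derive N2.2.
have der_at_N0 (f : R -> R) : derivable f n0 1 -> is_derive (N s0) 1 f (derive1 f n0).
  by rewrite N_s0; apply: derivable1_is_derive.
have dterm (f h : R -> R) : derivable f n0 1 -> derivable (derive1 f) n0 1 ->
    derivable h s0 1 -> derivable (derive1 h) s0 1 ->
    is_derive s0 1 (fun t => derive1 f (N t) * derive1 N t * h t + f (N t) * derive1 h t)
      (derive1 (derive1 f) n0 * derive1 N s0 ^+ 2 * h s0
       + derive1 f n0 * derive1 (derive1 N) s0 * h s0
       + 2 * derive1 f n0 * derive1 N s0 * derive1 h s0 + f n0 * derive1 (derive1 h) s0).
  move=> f1 f2 h1 h2.
  have := is_derive1D
    (is_derive1M (is_derive1M (is_derive1_comp (der_at_N0 _ f2) dN) d2N)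
                 (derivable1_is_derive h1))
    (is_derive1M (is_derive1_comp (der_at_N0 _ f1) dN) (derivable1_is_derive h2)).
  by move=> /is_derive_eq; apply; rewrite /= N_s0; generalize_derive1; ring.
have := is_derive1D (dterm _ _ (al_der n0_gt0) al2.2 (ta_der s0I) ta2.2)
                    (dterm _ _ (be_der n0_gt0) be2.2 (tc_der s0I) tc2.2).
move=> /is_derive1_unique; apply.
apply: (near_eq_is_derive1 (f := fun _ => 0) nearI).
by move=> t; rewrite inE => /dPhi_eq0.
Qed.

Lemma dn_separable sg y : 0 < y -> dn F sg y = derive1 al y * a sg + derive1 be y * c sg.
Proof.
move=> y_gt0; apply: is_derive1_val.
have := is_derive1D (is_derive1M (derivable1_is_derive (al_der y_gt0)) (is_derive1_cst (a sg) y))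
                    (is_derive1M (derivable1_is_derive (be_der y_gt0)) (is_derive1_cst (c sg) y)).
by move=> /is_derive_eq; apply; generalize_derive1; ring.
Qed.

Lemma dsig_separable sg : sg \in I ->
  dsig F sg n0 = al n0 * derive1 ta sg + be n0 * derive1 tc sg.
Proof.
move=> sgI; apply: is_derive1_val.
apply: (near_eq_is_derive1 (f := fun t => al n0 * ta t + be n0 * tc t) (near_in_itvoo sgI)).
  by move=> t; rewrite inE => tI; rewrite a_eq ?c_eq.
apply: is_derive_eq (is_derive1D
  (is_derive1M (is_derive1_cst (al n0) sg) (derivable1_is_derive (ta_der sgI)))
  (is_derive1M (is_derive1_cst (be n0) sg) (derivable1_is_derive (tc_der sgI)))) _.
by generalize_derive1; ring.
Qed.

Lemma dsig_dsig_separable :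
  derive1 (fun sg => dsig F sg n0) s0
  = al n0 * derive1 (derive1 ta) s0 + be n0 * derive1 (derive1 tc) s0.
Proof.
apply: is_derive1_val.
apply: (near_eq_is_derive1
  (f := fun sg => al n0 * derive1 ta sg + be n0 * derive1 tc sg) nearI).
  by move=> t; rewrite inE => tI; rewrite dsig_separable.
apply: is_derive_eq (is_derive1D
  (is_derive1M (is_derive1_cst (al n0) s0) (derivable1_is_derive ta2.2))
  (is_derive1M (is_derive1_cst (be n0) s0) (derivable1_is_derive tc2.2))) _.
by generalize_derive1; ring.
Qed.

Lemma dn_dn_separable :
  derive1 (fun m => dn F s0 m) n0
  = derive1 (derive1 al) n0 * ta s0 + derive1 (derive1 be) n0 * tc s0.
Proof.
apply: is_derive1_val.
apply: (near_eq_is_derive1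
  (f := fun m => derive1 al m * a s0 + derive1 be m * c s0) (lt_nbhsr n0_gt0)).
  by move=> m; rewrite inE => m_gt0; rewrite dn_separable.
apply: is_derive_eq (is_derive1D
  (is_derive1M (derivable1_is_derive al2.2) (is_derive1_cst (a s0) n0))
  (is_derive1M (derivable1_is_derive be2.2) (is_derive1_cst (c s0) n0))) _.
by rewrite a_eq ?c_eq //; generalize_derive1; ring.
Qed.

Lemma dsig_dn_separable :
  derive1 (fun sg => dn F sg n0) s0
  = derive1 al n0 * derive1 ta s0 + derive1 be n0 * derive1 tc s0.
Proof.
apply: is_derive1_val.
apply: (near_eq_is_derive1
  (f := fun sg => derive1 al n0 * ta sg + derive1 be n0 * tc sg) nearI).
  by move=> t; rewrite inE => tI; rewrite dn_separable // a_eq ?c_eq.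
apply: is_derive_eq (is_derive1D
  (is_derive1M (is_derive1_cst (derive1 al n0) s0) (derivable1_is_derive (ta_der s0I)))
  (is_derive1M (is_derive1_cst (derive1 be n0) s0) (derivable1_is_derive (tc_der s0I)))) _.
by generalize_derive1; ring.
Qed.

Lemma separable_level_curve_critical :
  dn F s0 n0 = 0 /\ dsig F s0 n0 = 0 /\ hessian_det F s0 n0 <= 0.
Proof.
have dn0 : dn F s0 n0 = 0 by rewrite dn_separable // a_eq ?c_eq.
split=> //; split.
  rewrite dsig_separable //; transitivity
    (dPhi s0 - derive1 N s0 * (derive1 al n0 * ta s0 + derive1 be n0 * tc s0)).
    by rewrite /dPhi N_s0; generalize_derive1; ring.
  by rewrite dPhi_eq0 // critical mulr0 subr0.
rewrite /hessian_det dsig_dsig_separable dn_dn_separable dsig_dn_separable.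
apply: (@hessian_det_nonpos _ _ _ _ _ (derive1 N s0) (derive1 (derive1 N) s0) _ critical).
by rewrite -[RHS]dPhi_second; generalize_derive1; ring.
Qed.

End SeparableLevelCurve.

Section Metric.
Variables (R : realType) (k : nat).

Lemma gdot_evec (g : 'rV[R]_k.+2 -> 'M[R]_k.+2) x a b : gdot g x (evec a) (evec b) = g x a b.
Proof.
rewrite /gdot (bigD1 a) //= [X in _ + X]big1 ?addr0 => [|i /negbTE ia]; last first.
  by rewrite big1 // => j _; rewrite !mxE /= ia mulr0 mul0r.
rewrite (bigD1 b) //= [X in _ + X]big1 ?addr0 => [|j /negbTE jb]; last first.
  by rewrite !mxE /= jb mulr0.
by rewrite !mxE /= !eqxx !mulr1.
Qed.

Lemma det_minkowski : \det (@Defs.minkowski R k) = -1.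
Proof.
rewrite /Defs.minkowski det_diag (bigD1 tau_i) //= big1 ?mulr1; first by rewrite mxE eqxx.
by move=> i /negbTE i_neq; rewrite mxE i_neq.
Qed.

Lemma lorentzian_unit (G : 'M[R]_k.+2) : lorentzian G -> G \in unitmx.
Proof.
move=> [_ [A [_ HA]]]; rewrite unitmxE unitfE; apply/eqP => G0.
have := congr1 determinant HA; rewrite !det_mulmx det_tr det_minkowski G0 mulr0 mul0r.
by move/eqP; rewrite eq_sym oppr_eq0 oner_eq0.
Qed.

End Metric.

Definition lorentz_factor (R : realType) (v : R) := (Num.sqrt (1 - v ^+ 2))^-1.

Lemma lorentz_factorE (R : realType) (v : R) : 0 <= v < 1 ->
  lorentz_factor v ^+ 2 * (1 - v ^+ 2) = 1.
Proof.
move=> /andP[v_ge0 v_lt1]; have w_gt0 : 0 < 1 - v ^+ 2.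
  by rewrite subr_gt0 expr2 (le_lt_trans (ler_piMl _ (ltW v_lt1))).
by rewrite /lorentz_factor exprVn sqr_sqrtr ?(ltW w_gt0) // mulVf // gt_eqF.
Qed.

Section SteadyFlow.
Variables (R : realType) (k : nat).
Local Notation pt := 'rV[R]_k.+2.
Variables (U : set pt) (g : pt -> 'M[R]_k.+2) (n h P s v : pt -> R)
  (u : pt -> 'rV[R]_k.+2) (Hn : R -> R -> R) (gam : R -> pt) (sig1 sig2 sig0 : R) (p : pt).
Hypotheses (oU : open U) (g_lor : forall x, U x -> lorentzian (g x))
  (g_C2 : forall a b, C2_on U (fun x => g x a b))
  (killing : forall x, U x -> lie_met xi g x = 0)
  (xi_timelike : forall x, U x -> gdot g x (xi x) (xi x) < 0)
  (xi_eta : forall x, U x -> gdot g x (xi x) (etabar x) = 0)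
  (n_gt0 : forall x, U x -> 0 < n x) (h_gt0 : forall x, U x -> 0 < h x)
  (n_C2 : C2_on U n) (h_C2 : C2_on U h) (P_C2 : C2_on U P)
  (u_C2 : forall a, C2_on U (fun x => u x 0 a))
  (cont : forall x, U x -> div_vec g (fun y => n y *: u y) x = 0)
  (euler : forall x, U x -> forall nu, div_tens g (stress g n h P u) nu x = 0)
  (eos : forall x, U x -> h x = Hn (n x) (s x))
  (Hn_C2 : forall s0, C2_on_R [set m | 0 < m] (fun m => Hn m s0))
  (sound_gt0 : forall x, U x -> 0 < sound2 Hn (n x) (s x))
  (P_steady : forall x, U x -> lie_fun xi P x = 0)
  (v_range : forall x, U x -> 0 <= v x < 1)
  (u_decomp : forall x, U x -> u x = (Num.sqrt (1 - v x ^+ 2))^-1 *: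
     ((Num.sqrt `|gdot g x (xi x) (xi x)|)^-1 *: xi x + v x *: etabar x))
  (sig0I : sig1 < sig0 < sig2)
  (gamU : forall t, sig1 < t < sig2 -> U (gam t))
  (gam_flow : forall t, sig1 < t < sig2 -> is_derive t 1 gam (u (gam t)))
  (gam_p : gam sig0 = p)
  (s_const : forall t, sig1 < t < sig2 -> s (gam t) = s p)
  (mu_const : forall t, sig1 < t < sig2 -> mu_of g n u (gam t) = mu_of g n u p)
  (sonic : v p = Num.sqrt (sound2 Hn (n p) (s p))).

Lemma g_tau_tau_lt0 x : U x -> g x tau_i tau_i < 0.
Proof. by move=> /xi_timelike; rewrite /xi gdot_evec. Qed.

Lemma u_coord x a : U x -> u x 0 a = lorentz_factor (v x) *
  ((Num.sqrt `|g x tau_i tau_i|)^-1 * (a == tau_i)%:R + v x * (a == lam_i)%:R).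
Proof. by move=> Ux; rewrite u_decomp // /xi /etabar gdot_evec !mxE. Qed.

Lemma u_lam x : U x -> u x 0 lam_i = lorentz_factor (v x) * v x.
Proof. by move=> Ux; rewrite u_coord // eqxx mulr0 add0r mulr1. Qed.

Lemma u_lower_tau x : U x ->
  \sum_(nu < k.+2) g x tau_i nu * u x 0 nu
  = - (lorentz_factor (v x) * Num.sqrt `|g x tau_i tau_i|).
Proof.
move=> Ux; under eq_bigr => nu _ do rewrite u_coord // mulrCA mulrDr !mulrA.
rewrite -mulr_sumr big_split /= !sum_delta_r.
have := xi_eta Ux; rewrite /xi /etabar gdot_evec => ->.
have /ltr0_norm g_abs := g_tau_tau_lt0 Ux.
have A_gt0 : 0 < Num.sqrt `|g x tau_i tau_i|.
  by rewrite sqrtr_gt0 normr_gt0 ltr0_neq0 // g_tau_tau_lt0.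
set A := Num.sqrt _ in A_gt0 *.
have -> : g x tau_i tau_i = - A ^+ 2 by rewrite sqr_sqrtr // g_abs opprK.
by rewrite mul0r addr0 mulNr expr2 mulfK ?gt_eqF // mulrN.
Qed.

Local Notation H m := (Hn m (s p)).

(* Along the flow, [F (sg, n)] is the square of the Bernoulli quantity
   [h u_tau]: this uses [u_tau = - lorentz_factor v * sqrt |g_tau_tau|]. *)
Lemma Ffun_bernoulli x : U x -> s x = s p ->
  H (n x) * H (n x) * (- g x tau_i tau_i)
  + H (n x) * H (n x) * ((n x)^-1 * (n x)^-1)
    * (- g x tau_i tau_i * ((n x * u x 0 lam_i) * (n x * u x 0 lam_i)))
  = (h x * \sum_(nu < k.+2) g x tau_i nu * u x 0 nu) ^+ 2.
Proof.
move=> Ux sx; rewrite u_lower_tau // u_lam // eos // sx.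
have /ltr0_norm g_abs := g_tau_tau_lt0 Ux.
have e2 := lorentz_factorE (v_range Ux).
have nx_neq0 := lt0r_neq0 (n_gt0 Ux).
set A := Num.sqrt _; set L := lorentz_factor _.
have -> : g x tau_i tau_i = - A ^+ 2 by rewrite sqr_sqrtr // g_abs opprK.
apply/eqP; rewrite -subr_eq0; apply/eqP.
transitivity (H (n x) * H (n x) * A ^+ 2 * (1 - L ^+ 2 * (1 - v x ^+ 2))); first by field.
by rewrite e2 subrr mulr0.
Qed.

Lemma C1_on_flow f t : C1_on U f -> sig1 < t < sig2 ->
  is_derive t 1 (fun t => f (gam t)) (\sum_(m < k.+2) pd m f (gam t) * u (gam t) 0 m).
Proof. by move=> Cf tI; apply: is_derive_C1_comp oU Cf (gamU tI) (gam_flow tI). Qed.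

Lemma bernoulli_flow t : sig1 < t < sig2 ->
  is_derive t 1 (fun t => h (gam t) * \sum_(nu < k.+2) g (gam t) tau_i nu * u (gam t) 0 nu) 0.
Proof.
move=> tI; have Ux := gamU tI.
apply: is_derive_eq (is_derive1M (C1_on_flow h_C2.1 tI) (is_derive1_sum (fun nu =>
  is_derive1M (C1_on_flow (g_C2 tau_i nu).1 tI) (C1_on_flow (u_C2 nu).1 tI)))) _.
rewrite -[RHS](bernoulli_point oU (fun y Uy => (g_lor Uy).1) (fun y Uy => lorentzian_unit (g_lor Uy))
  (fun a b => (g_C2 a b).1) n_C2.1 h_C2.1 P_C2.1 (fun a => (u_C2 a).1) Ux (killing Ux)
  (P_steady Ux) (cont Ux) (euler Ux) (lt0r_neq0 (n_gt0 Ux))).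
rewrite addrC mulrC; congr (_ + _); congr (_ * _).
by apply: eq_bigr => nu _; rewrite addrC mulrC.
Qed.

Local Notation I := (fun t : R => t \in `]sig1, sig2[).

Lemma derivable2_flow f : C2_on U f -> derivable2_at I sig0 (fun t => f (gam t)).
Proof.
move=> Cf; split=> [t|]; first by rewrite in_itv => /(C1_on_flow Cf.1) [].
have sig0I' : sig0 \in `]sig1, sig2[ by rewrite in_itv.
have [] // := near_eq_is_derive1 (near_in_itvoo sig0I')
  (g := derive1 (fun t => f (gam t))) _ (is_derive1_sum (fun m =>
    is_derive1M (C1_on_flow (Cf.2 m) sig0I) (C1_on_flow (u_C2 m).1 sig0I))).
move=> t; rewrite inE in_itv => tI; apply/esym/is_derive1_val.
exact: C1_on_flow Cf.1 tI.
Qed.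

Let al m := H m * H m.
Let be m := H m * H m * (m^-1 * m^-1).
Let ta t := - g (gam t) tau_i tau_i.
Let tc t := - g (gam t) tau_i tau_i
  * ((n (gam t) * u (gam t) 0 lam_i) * (n (gam t) * u (gam t) 0 lam_i)).

Let Up : U p.
Proof. by rewrite -gam_p; apply: gamU. Qed.

Let H_derivable2 : derivable2_at [set m | 0 < m] (n p) (fun m => H m).
Proof. by have [H1 _] := Hn_C2 (s p); split=> [m /H1[]|]; case: (H1 _ (n_gt0 Up)). Qed.

(* With [v^2 = n H' / H] at the sonic point, [d_n F] vanishes at [p]. *)
Lemma sonic_critical : derive1 al (n p) * ta sig0 + derive1 be (n p) * tc sig0 = 0.
Proof.
have np_neq0 := lt0r_neq0 (n_gt0 Up).
have dH := derivable1_is_derive (H_derivable2.1 _ (n_gt0 Up)).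
rewrite (is_derive1_val (is_derive1M dH dH)).
rewrite (is_derive1_val (is_derive1M (is_derive1M dH dH)
  (is_derive1M (is_derive1_inv np_neq0) (is_derive1_inv np_neq0)))).
rewrite /ta /tc gam_p u_lam //.
have Hp_neq0 : H (n p) != 0 by rewrite -eos //; apply/lt0r_neq0/h_gt0.
have v2 : v p ^+ 2 = n p * derive1 (fun m => H m) (n p) / H (n p).
  by rewrite sonic sqr_sqrtr // ltW // sound_gt0.
have L2 := lorentz_factorE (v_range Up); set L := lorentz_factor _ in L2 *.
set d := derive1 _ (n p) in v2 *; clearbody d.
transitivity (2 * H (n p) * (- g p tau_i tau_i)
  * (d * (1 - L ^+ 2 * (1 - v p ^+ 2)) + L ^+ 2 * (d - H (n p) * v p ^+ 2 / n p))).
  by field.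
rewrite L2 subrr mulr0 add0r v2 (_ : d - _ = 0) ?mulr0 //.
by field; rewrite np_neq0 Hp_neq0.
Qed.

Lemma level_flow t : t \in `]sig1, sig2[ ->
  is_derive t 1 (fun t => al (n (gam t)) * ta t + be (n (gam t)) * tc t) 0.
Proof.
move=> tI; have tI' : sig1 < t < sig2 by rewrite in_itv in tI.
pose psi t := h (gam t) * \sum_(nu < k.+2) g (gam t) tau_i nu * u (gam t) 0 nu.
apply: (near_eq_is_derive1 (f := fun t => psi t * psi t) (near_in_itvoo tI)).
  move=> t'; rewrite inE in_itv => t'I.
  by rewrite /al /be /ta /tc Ffun_bernoulli ?expr2 //; [apply: gamU | apply: s_const].
by apply: is_derive_eq (is_derive1M (bernoulli_flow tI') (bernoulli_flow tI')) _; rewrite mulr0 addr0.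
Qed.

Lemma mu_flow t : sig1 < t < sig2 ->
  (mu_of g n u p / Num.sqrt `|\det (g (gam t))|) ^+ 2
  = n (gam t) * u (gam t) 0 lam_i * (n (gam t) * u (gam t) 0 lam_i).
Proof.
move=> tI; have det_neq0 : Num.sqrt `|\det (g (gam t))| != 0.
  by rewrite sqrtr_eq0 -ltNge normr_gt0 -unitfE -unitmxE; apply/lorentzian_unit/g_lor/gamU.
by rewrite -(mu_const tI) /mu_of expr2; field.
Qed.

Lemma sonic_point_critical :
  let F := Ffun g gam Hn (s p) (mu_of g n u p) in
  dn F sig0 (n p) = 0 /\ dsig F sig0 (n p) = 0 /\ hessian_det F sig0 (n p) <= 0.
Proof.
move=> F; pose a sg := `|g (gam sg) tau_i tau_i|.
pose c sg := `|g (gam sg) tau_i tau_i| * (mu_of g n u p / Num.sqrt `|\det (g (gam sg))|) ^+ 2.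
have -> : F = fun sg m => al m * a sg + be m * c sg.
  by apply/funext => sg; apply/funext => m; rewrite /F /Ffun /al /be /a /c invfM; ring.
have np_gt0 := n_gt0 Up.
have np_near : \forall m \near n p, [set m | 0 < m] m by apply: lt_nbhsr.
have al2 := derivable2_atM np_near np_gt0 H_derivable2 H_derivable2.
have be2 := derivable2_atM np_near np_gt0 al2
  (derivable2_atM np_near np_gt0 (derivable2_at_inv np_gt0) (derivable2_at_inv np_gt0)).
have sig0I' : sig0 \in `]sig1, sig2[ by rewrite in_itv.
have I_near := near_in_itvoo sig0I'.
have ta2 := derivable2_atN I_near (derivable2_flow (g_C2 tau_i tau_i)).
have nu2 := derivable2_atM I_near sig0I' (derivable2_flow n_C2) (derivable2_flow (u_C2 lam_i)).
have tc2 := derivable2_atM I_near sig0I' ta2 (derivable2_atM I_near sig0I' nu2 nu2).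
have a_eq : {in `]sig1, sig2[, a =1 ta}.
  by move=> t; rewrite in_itv => tI; rewrite /a /ta ltr0_norm //; apply/g_tau_tau_lt0/gamU.
have c_eq : {in `]sig1, sig2[, c =1 tc}.
  move=> t; rewrite in_itv => tI; rewrite /c /tc mu_flow // ltr0_norm //.
  exact/g_tau_tau_lt0/gamU.
have N_gt0 : {in `]sig1, sig2[, forall t, 0 < n (gam t)}.
  by move=> t; rewrite in_itv => tI; apply/n_gt0/gamU.
exact: (separable_level_curve_critical sig0I' np_gt0 (congr1 n gam_p) al2 be2 a_eq c_eq
  ta2 tc2 (derivable2_flow n_C2) N_gt0 level_flow sonic_critical).
Qed.

End SteadyFlow.

Unset Implicit Arguments.

Theorem theorem7 (R : realType) (k : nat) (U : set 'rV[R]_k.+2)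
  (g : 'rV[R]_k.+2 -> 'M[R]_k.+2)
  (n h P s Temp v : 'rV[R]_k.+2 -> R) (u : 'rV[R]_k.+2 -> 'rV[R]_k.+2)
  (Hn : R -> R -> R) (gam : R -> 'rV[R]_k.+2) (sig1 sig2 sig0 : R) (p : 'rV[R]_k.+2)
  (* the chart domain and the metric *)
  (hU : open U)
  (hlor : forall x, U x -> lorentzian (g x))
  (hgC2 : forall a b, C2_on U (fun x => g x a b))
  (* xi = d/dtau is a timelike Killing field; eta-bar = d/dlambda unit, spacelike, orthogonal *)
  (hKill : forall x, U x -> lie_met xi g x = 0)
  (htime : forall x, U x -> gdot g x (xi x) (xi x) < 0)
  (heta : forall x, U x -> gdot g x (etabar x) (etabar x) = 1 /\ gdot g x (xi x) (etabar x) = 0)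
  (* the perfect fluid, of class C^2 *)
  (hpos : forall x, U x -> 0 < n x /\ 0 < h x /\ 0 < P x /\ 0 < s x /\ 0 < Temp x)
  (hC2 : C2_on U n /\ C2_on U h /\ C2_on U P /\ C2_on U s /\ C2_on U Temp /\ C2_on U v
         /\ forall a, C2_on U (fun x => u x 0 a))
  (hunorm : forall x, U x -> gdot g x (u x) (u x) = -1)
  (hthermo : forall x, U x -> forall a,
      pd a h x = Temp x * pd a s x + (n x)^-1 * pd a P x)
  (hcont : forall x, U x -> div_vec g (fun y => n y *: u y) x = 0)
  (heuler : forall x, U x -> forall nu, div_tens g (stress g n h P u) nu x = 0)
  (hEOS : forall x, U x -> h x = Hn (n x) (s x))
  (hHn : forall s0, C2_on_R [set m | 0 < m] (fun m => Hn m s0))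
  (hvs : forall x, U x -> 0 < sound2 Hn (n x) (s x) < 1)
  (* steadiness *)
  (hsteady : forall x, U x ->
      lie_fun xi P x = 0 /\ lie_fun xi s x = 0 /\ lie_vec xi u x = 0 /\ lie_vec xi etabar x = 0)
  (hv : forall x, U x -> 0 <= v x < 1)
  (hu : forall x, U x -> u x = (Num.sqrt (1 - v x ^+ 2))^-1 *:
          ((Num.sqrt `|gdot g x (xi x) (xi x)|)^-1 *: xi x + v x *: etabar x))
  (* the fluid world line through p, parametrized by proper time *)
  (hsig : sig1 < sig0 < sig2)
  (hgamU : forall t, sig1 < t < sig2 -> U (gam t))
  (hgam : forall t, sig1 < t < sig2 -> is_derive t 1 gam (u (gam t)))
  (hp : gam sig0 = p)
  (hs_const : forall t, sig1 < t < sig2 -> s (gam t) = s p)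
  (hmu_const : forall t, sig1 < t < sig2 -> mu_of g n u (gam t) = mu_of g n u p)
  (* p is a sonic point *)
  (hsonic : v p = Num.sqrt (sound2 Hn (n p) (s p))) :
  let F := Ffun g gam Hn (s p) (mu_of g n u p) in
  dn F sig0 (n p) = 0 /\ dsig F sig0 (n p) = 0 /\ hessian_det F sig0 (n p) <= 0.
Proof.
have [n_C2 [h_C2 [P_C2 [_ [_ [_ u_C2]]]]]] := hC2.
exact: (sonic_point_critical hU hlor hgC2 hKill htime (fun x Ux => (heta x Ux).2)
  (fun x Ux => (hpos x Ux).1) (fun x Ux => (hpos x Ux).2.1) n_C2 h_C2 P_C2 u_C2 hcont heuler
  hEOS hHn (fun x Ux => (andP (hvs x Ux)).1) (fun x Ux => (hsteady x Ux).1) hv hu hsig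
  hgamU hgam hp hs_const hmu_const hsonic).
Qed.
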